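(* Let $R$ be a unital ring with involution and let $a,b\in R$ both be core invertible with $a\overset{\circledast}{\leq} b$. Then: (1) $ab$, $a^2$ and $ba$ are core invertible and $(ab)^{\circledast}=b^{\circledast}a^{\circledast}=(a^{\circledast})^{2}=(a^{2})^{\circledast}=(ba)^{\circledast}$; (2) if moreover $a$ is an EP element, then $ab$ is an EP element.
   Context: $R$ is a ring with identity and an involution $x\mapsto x^{*}$. An element $a\in R$ is core invertible if there exists $x\in R$ with $axa=a$, $xR=aR$ and $Rx=Ra^{*}$; such $x$ is unique, called the core inverse of $a$ and denoted $a^{\circledast}$. For $a$ core invertible and $b\in R$, $a\overset{\circledast}{\leq} b$ means $a^{\circledast}a=a^{\circledast}b$ and $aa^{\circledast}=ba^{\circledast}$. The Moore–Penrose inverse of $a$ is the (unique if it exists) $x$ with $axa=a$, $xax=x$, $(ax)^*=ax$, $(xa)^*=xa$, denoted $a^{\dagger}$. The group inverse of $a$ is the (unique if it exists) $x$ with $axa=a$, $xax=x$, $ax=xa$, denoted $a^{\#}$. An element $a$ is EP if both $a^{\dagger}$ and $a^{\#}$ exist and $a^{\dagger}=a^{\#}$. *)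

From HB Require Import structures.
From mathcomp Require Import all_boot all_order all_algebra.
Set Implicit Arguments. Unset Strict Implicit. Unset Printing Implicit Defensive.
Import GRing.Theory.
Local Open Scope ring_scope.

Definition involution (R : pzRingType) (star : R -> R) : Prop :=
  [/\ forall x y : R, star (x + y) = star x + star y,
      forall x y : R, star (x * y) = star y * star x
    & forall x : R, star (star x) = x].

Definition same_right_ideal (R : pzRingType) (x y : R) : Prop :=
  (exists r : R, x = y * r) /\ (exists s : R, y = x * s).
Definition same_left_ideal (R : pzRingType) (x y : R) : Prop :=
  (exists r : R, x = r * y) /\ (exists s : R, y = s * x).

Definition is_core_inverse (R : pzRingType) (star : R -> R) (a x : R) : Prop :=
  [/\ a * x * a = a, same_right_ideal x a & same_left_ideal x (star a)].

Definition core_invertible (R : pzRingType) (star : R -> R) (a : R) : Prop :=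
  exists x, is_core_inverse star a x.

Definition core_le (R : pzRingType) (star : R -> R) (a xa b : R) : Prop :=
  is_core_inverse star a xa /\ xa * a = xa * b /\ a * xa = b * xa.

Definition is_MP_inverse (R : pzRingType) (star : R -> R) (a x : R) : Prop :=
  [/\ a * x * a = a, x * a * x = x, star (a * x) = a * x & star (x * a) = x * a].

Definition is_group_inverse (R : pzRingType) (a x : R) : Prop :=
  [/\ a * x * a = a, x * a * x = x & a * x = x * a].

Definition EP (R : pzRingType) (star : R -> R) (a : R) : Prop :=
  exists x, is_MP_inverse star a x /\ is_group_inverse a x.

From HB Require Import structures.
From mathcomp Require Import all_boot all_order all_algebra.
Set Implicit Arguments.
Unset Strict Implicit.
Unset Printing Implicit Defensive.
Import GRing.Theory.
Local Open Scope ring_scope.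

(* The core inverse x of a is characterised by the identities axa = a, xax = x,
   (ax)^* = ax, xa^2 = a and ax^2 = x.  From a <= b in the core order one gets
   ba = a^2 and bx^2 = x, so a^2 and ab both satisfy these identities with x^2;
   and if y is the core inverse of b then yx = y b^2 x^3 = bx^3 = x^2.  If a is EP,
   its core inverse commutes with a, hence x^2 commutes with ab, which makes ab EP. *)

Section CoreInverse.

Variables (R : pzRingType) (star : R -> R).
Hypothesis star_inv : involution star.

Lemma core_inverseP (a x : R) :
  is_core_inverse star a x <->
  [/\ a * x * a = a, x * a * x = x, star (a * x) = a * x,
      x * a ^+ 2 = a & a * x ^+ 2 = x].
Proof.
have [_ starM starK] := star_inv; rewrite !expr2; split.
  move=> [axa [[r xr] [s as_]] [[r' xr'] _]].
  (* Rx = Ra^* gives x (ax)^* = x, from which (ax)^* = ax follows. *)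
  have x_starax : x * star (a * x) = x by rewrite {1}xr' -mulrA -starM axa -xr'.
  have ax_herm : star (a * x) = a * x.
    have ax_eq : a * x = a * x * star (a * x) by rewrite -mulrA x_starax.
    by rewrite {1}ax_eq starM starK -ax_eq.
  have xax : x * a * x = x by rewrite -mulrA -ax_herm x_starax.
  split=> //.
  - by rewrite {2}as_ !mulrA xax -as_.
  - by rewrite {2}xr !mulrA axa -xr.
move=> [axa xax ax_herm xa2 ax2]; split=> //.
  by split; [exists (x * x) | exists (a * a)].
split.
  by exists (x * star x); rewrite -mulrA -starM ax_herm mulrA xax.
by exists (star a * a); rewrite -mulrA -ax_herm -starM axa.
Qed.

Lemma core_inverse_expr2 (a x : R) :
  is_core_inverse star a x -> is_core_inverse star (a ^+ 2) (x ^+ 2).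
Proof.
move=> /core_inverseP [axa xax ax_herm]; rewrite !expr2 => xa2 ax2.
have a2x2 : a * a * (x * x) = a * x by rewrite -mulrA ax2.
have x2a2 : x * x * (a * a) = x * a by rewrite -mulrA xa2.
apply/core_inverseP; rewrite !expr2; split.
- by rewrite a2x2 -mulrA xa2.
- by rewrite x2a2 mulrA xax.
- by rewrite a2x2.
- by rewrite mulrA x2a2 -mulrA (mulrA a a a) (mulrA x) xa2.
- by rewrite mulrA a2x2 -mulrA (mulrA x x x) (mulrA a) ax2.
Qed.

Lemma core_inverse_comm_EP (a x : R) :
  is_core_inverse star a x -> a * x = x * a -> EP star a.
Proof.
move=> /core_inverseP [axa xax ax_herm _ _] ax_xa.
by exists x; split; split=> //; rewrite -ax_xa.
Qed.

Lemma EP_core_inverse_comm (a x : R) :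
  EP star a -> is_core_inverse star a x -> a * x = x * a.
Proof.
have [_ starM _] := star_inv.
move=> [z [[aza _ az_herm _] [_ _ az_za]]].
move=> /core_inverseP [axa _ ax_herm]; rewrite expr2 => xa2 _.
(* ax and az are hermitian idempotents generating the same right ideal aR. *)
have ax_az : a * x = a * z.
  have ax_az_az : a * x * (a * z) = a * z by rewrite mulrA axa.
  have az_ax_ax : a * z * (a * x) = a * x by rewrite mulrA aza.
  by rewrite -ax_herm -az_ax_ax starM ax_herm az_herm ax_az_az.
have xa_az : x * a = a * z.
  by rewrite -{1}aza -mulrA -az_za (mulrA a) mulrA xa2.
by rewrite xa_az ax_az.
Qed.

Section CoreLe.

Variables a b x : R.
Hypothesis a_le_b : core_le star a x b.

Let a_core : is_core_inverse star a x. Proof. by case: a_le_b. Qed.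

Lemma core_le_mul_sqr : b * a = a ^+ 2.
Proof.
have [_ [_ ax_bx]] := a_le_b; have /core_inverseP [_ _ _ xa2 _] := a_core.
by rewrite -{1}xa2 mulrA -ax_bx -mulrA xa2.
Qed.

Lemma core_le_mul_inv_sqr : b * x ^+ 2 = x.
Proof.
have [_ [_ ax_bx]] := a_le_b; have /core_inverseP [_ _ _ _ ax2] := a_core.
by rewrite expr2 mulrA -ax_bx -mulrA -expr2 ax2.
Qed.

Lemma core_le_mul_core_inverses (y : R) :
  is_core_inverse star b y -> y * x = x ^+ 2.
Proof.
move=> /core_inverseP [_ _ _ yb2 _].
have x_eq : x = b ^+ 2 * (x ^+ 2 * x).
  rewrite expr2 -mulrA (mulrA b (x ^+ 2)) core_le_mul_inv_sqr.
  by rewrite -expr2 core_le_mul_inv_sqr.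
by rewrite {1}x_eq mulrA yb2 mulrA core_le_mul_inv_sqr expr2.
Qed.

Lemma core_le_core_inverse_mul : is_core_inverse star (a * b) (x ^+ 2).
Proof.
have /core_inverseP [axa xax ax_herm xa2 ax2] := a_core.
have ba := core_le_mul_sqr; have bx2 := core_le_mul_inv_sqr.
rewrite !expr2 in xa2 ax2 ba bx2 *.
have abx2 : a * b * (x * x) = a * x by rewrite -mulrA bx2.
apply/core_inverseP; rewrite !expr2; split.
- by rewrite abx2 mulrA axa.
- by rewrite -mulrA abx2 -mulrA (mulrA x a x) xax.
- by rewrite abx2.
- rewrite -(mulrA a b) (mulrA b a b) ba -!mulrA.
  by rewrite (mulrA a a (a * b)) (mulrA x (a * a)) xa2 (mulrA a a b) mulrA xa2.
- by rewrite mulrA abx2 -mulrA (mulrA x x x) (mulrA a) ax2.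
Qed.

Lemma core_le_EP_mul : EP star a -> EP star (a * b).
Proof.
move=> /EP_core_inverse_comm/(_ a_core) ax_xa.
have [_ [xa_xb _]] := a_le_b; have /core_inverseP [_ xax _ _ _] := a_core.
apply: (core_inverse_comm_EP core_le_core_inverse_mul).
rewrite -mulrA core_le_mul_inv_sqr expr2 !mulrA -(mulrA x x a) -ax_xa.
by rewrite (mulrA x a x) xax -xa_xb ax_xa.
Qed.

End CoreLe.

End CoreInverse.

Theorem theorem2p10 (R : pzRingType) (star : R -> R) (a b xa xb : R) :
  involution star ->
  is_core_inverse star a xa ->
  is_core_inverse star b xb ->
  core_le star a xa b ->
  ([/\ is_core_inverse star (a * b) (xb * xa),
       xb * xa = xa ^+ 2,
       is_core_inverse star (a ^+ 2) (xa ^+ 2)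
     & is_core_inverse star (b * a) (xa ^+ 2)]
   /\ (EP star a -> EP star (a * b))).
Proof.
move=> star_inv a_core b_core a_le_b.
have xbxa : xb * xa = xa ^+ 2 := core_le_mul_core_inverses star_inv a_le_b b_core.
split; last exact: (core_le_EP_mul star_inv a_le_b).
split=> //.
- by rewrite xbxa; exact: (core_le_core_inverse_mul star_inv a_le_b).
- exact: (core_inverse_expr2 star_inv a_core).
- rewrite (core_le_mul_sqr star_inv a_le_b).
  exact: (core_inverse_expr2 star_inv a_core).
Qed.
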